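(* Let $\mathcal{I}=(R,U,C,\omega)$ be an instance of Valued APEP$\langle \mathsf{BoD}_\forall,\mathsf{BoD}_\exists,\mathsf{SoD}_\exists,\mathsf{SoD}_\forall,\mathsf{Card}_{UB},\mathsf{Card}_{LB}\rangle$ with $k=|R|$, and let $\tau=\max_{(r,\ge,t)\in C}t$. Then $C$ is $3\tau k\binom{k}{2}$-wbounded. Moreover, for any complete authorization relation $A$ there exists a complete authorization relation $A^*\subseteq A$ such that $A^*$ has at most $3\tau\binom{k}{2}$ users (i.e. $|\{u:A^*(u)\neq\emptyset\}|\le 3\tau\binom{k}{2}$) and $w_C(A^* )\le w_C(A)$.
   Context: $U$ is a finite set of users, $R$ a finite set of resources; authorization relation $A\subseteq U\times R$, $A(r)=\{u:(u,r)\in A\}$, $A(u)=\{r:(u,r)\in A\}$; $A$ is complete if $A(r)\ne\emptyset$ for all $r$. A weighted constraint is $w_c:2^{U\times R}\to\mathbb{N}$; $w_C(A)=\sum_{c\in C}w_c(A)$. A Valued APEP instance $(R,U,C,\omega)$ has $\omega:U\times 2^R\to\mathbb{N}$ monotone in the second argument. For each constraint $c$, $f_c:\mathbb{Z}\to\mathbb{N}$ is nondecreasing with $f_c(z)=0$ iff $z\le 0$, and $\ell_c>0$ is a constant; $\mathrm{maxdiff}(A,r,r')=\max\{|A(r)\setminus A(r')|,|A(r')\setminus A(r)|\}$. The constraint types are: $\mathsf{Card}_{UB}$ $(r,\le,t)$ with $w_c(A)=f_c(|A(r)|-t)$; $\mathsf{Card}_{LB}$ $(r,\ge,t)$ with $w_c(A)=f_c(t-|A(r)|)$;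 $\mathsf{SoD}_\forall$ $(r,r',\updownarrow,\forall)$ with $w_c(A)=f_c(|A(r)\cap A(r')|)$; $\mathsf{BoD}_\forall$ $(r,r',\leftrightarrow,\forall)$ with $w_c(A)=f_c(\mathrm{maxdiff}(A,r,r'))$; $\mathsf{SoD}_\exists$ $(r,r',\updownarrow,\exists)$ with $w_c(A)=0$ if $A(r)\neq A(r')$ and $\ell_c$ otherwise; $\mathsf{BoD}_\exists$ $(r,r',\leftrightarrow,\exists)$ with $w_c(A)=0$ if $A(r)\cap A(r')\ne\emptyset$ and $\ell_c$ otherwise. Valued APEP$\langle X\rangle$ denotes instances all of whose constraints have types in $X$. $C$ is $t$-wbounded if for every complete $A$ with $|A|>t$ there is a complete $A'\subseteq A$ with $|A'|<|A|$ and $w_C(A')\le w_C(A)$. *)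

From Stdlib Require Lists.List.
From mathcomp Require Import all_boot all_order all_algebra.
Set Implicit Arguments. Unset Strict Implicit. Unset Printing Implicit Defensive.
Import Order.TTheory GRing.Theory Num.Theory.

Section APEP.
Variables (U R : finType).

Definition authR := {set U * R}.

Definition usersOf (A : authR) (r : R) : {set U} := [set u | (u, r) \in A].
Definition resOf (A : authR) (u : U) : {set R} := [set r | (u, r) \in A].

Definition complete (A : authR) : Prop := forall r : R, usersOf A r != set0.

Definition maxdiff (A : authR) (r r' : R) : nat :=
  maxn #|usersOf A r :\: usersOf A r'| #|usersOf A r' :\: usersOf A r|.

Inductive constr : Type :=
| CardUB of R & nat & (int -> nat)
| CardLB of R & nat & (int -> nat)
| SoDAll of R & R & (int -> nat)
| BoDAll of R & R & (int -> nat)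
| SoDEx of R & R & nat
| BoDEx of R & R & nat.

Definition wc (c : constr) (A : authR) : nat :=
  match c with
  | CardUB r t f => f (Posz #|usersOf A r| - Posz t)%R
  | CardLB r t f => f (Posz t - Posz #|usersOf A r|)%R
  | SoDAll r r' f => f (Posz #|usersOf A r :&: usersOf A r'|)
  | BoDAll r r' f => f (Posz (maxdiff A r r'))
  | SoDEx r r' l => if usersOf A r != usersOf A r' then 0 else l
  | BoDEx r r' l => if usersOf A r :&: usersOf A r' != set0 then 0 else l
  end.

Definition wC (C : seq constr) (A : authR) : nat := \sum_(c <- C) wc c A.

Definition good_f (f : int -> nat) : Prop :=
  (forall x y : int, (x <= y)%R -> f x <= f y) /\
  (forall z : int, f z = 0 <-> (z <= 0)%R).

Definition valid_constr (c : constr) : Prop :=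
  match c with
  | CardUB _ _ f | CardLB _ _ f | SoDAll _ _ f | BoDAll _ _ f => good_f f
  | SoDEx _ _ l | BoDEx _ _ l => 0 < l
  end.

Definition valid_constrs (C : seq constr) : Prop :=
  forall c, Stdlib.Lists.List.In c C -> valid_constr c.

Definition lb_threshold (c : constr) : nat :=
  match c with CardLB _ t _ => t | _ => 0 end.

(* tau = max_{(r,>=,t) in C} t  (0 if C has no Card_LB constraint) *)
Definition tau (C : seq constr) : nat := \max_(c <- C) lb_threshold c.

Definition wbounded (C : seq constr) (t : nat) : Prop :=
  forall A : authR, complete A -> t < #|A| ->
    exists A' : authR, [/\ A' \subset A, complete A', #|A'| < #|A| &
                           wC C A' <= wC C A].

Definition nusers (A : authR) : nat := #|[set u | resOf A u != set0]|.

Definition monotone_omega (omega : U -> {set R} -> nat) : Prop :=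
  forall u (X Y : {set R}), X \subset Y -> omega u X <= omega u Y.

End APEP.

From mathcomp Require Import all_boot all_algebra.
From mathcomp Require Import zify.
Set Implicit Arguments. Unset Strict Implicit. Unset Printing Implicit Defensive.

(* Restricting a complete A to a set S of users keeps it complete and never
   increases the weight of a constraint as long as S keeps, for every resource
   r, min(|A(r)|, tau) of its users, a common user of every pair of resources
   that share one, and a user telling apart every pair of resources with
   different user sets.  Taking tau users per resource and two users per pair
   of resources gives such an S with at most k tau + 2 C(k,2) <= 3 tau C(k,2)
   users.  The inequality fails only for k = 2, tau = 1, where two users
   suffice: a user holding both resources plus a separating one, or else one
   user per resource.  Each user of S holds at most k resources, whence the
   wboundedness. *)

Lemma card_bigcup_le (I T : finType) (P : pred I) (F : I -> {set T}) :
  #|\bigcup_(i | P i) F i| <= \sum_(i | P i) #|F i|.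
Proof.
apply: (big_rec2 (fun (S : {set T}) n => #|S| <= n)); first by rewrite cards0.
by move=> i S n _ IH; apply: leq_trans (leq_card_setU _ _) _; apply: leq_add.
Qed.

Lemma subset_pair (T : finType) (a b : T) (B : {set T}) :
  ([set a; b] \subset B) = (a \in B) && (b \in B).
Proof. by rewrite subUset !sub1set. Qed.

Definition pick_set (T : finType) (P : pred T) : {set T} :=
  if [pick x | P x] is Some x then [set x] else set0.

Lemma card_pick_set (T : finType) (P : pred T) : #|pick_set P| <= 1.
Proof. by rewrite /pick_set; case: pickP => [x _|_]; rewrite ?cards1 ?cards0. Qed.

Lemma pick_setP (T : finType) (P : pred T) x :
  P x -> exists2 y, y \in pick_set P & P y.
Proof.
rewrite /pick_set; case: pickP => [y Py _|noP Px]; first by exists y; rewrite ?set11.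
by rewrite noP in Px.
Qed.

Definition pairs (T : finType) : {set {set T}} := [set X : {set T} | #|X| == 2].

Lemma card_pairs (T : finType) : #|pairs T| = 'C(#|T|, 2).
Proof. exact: card_draws. Qed.

Lemma pair_in_pairs (T : finType) (a b : T) : a != b -> [set a; b] \in pairs T.
Proof. by move=> neq_ab; rewrite inE cards2 neq_ab. Qed.

Lemma pair_setT (T : finType) (a b : T) : #|T| = 2 -> a != b -> [set a; b] = setT.
Proof.
by move=> cardT neq_ab; apply/eqP; rewrite eqEcard subsetT cardsT cards2 neq_ab cardT.
Qed.

Lemma leq_wC (R U : finType) (C : seq (constr R)) (A A' : authR U R) :
  (forall c, List.In c C -> wc c A' <= wc c A) -> wC C A' <= wC C A.
Proof.
elim: C => [|c C IH] le_wc; first by rewrite /wC !big_nil.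
rewrite /wC !big_cons leq_add ?le_wc //=; first by left.
by apply: IH => c' inC; apply: le_wc; right.
Qed.

Lemma lb_threshold_le_tau (R : finType) (C : seq (constr R)) c :
  List.In c C -> lb_threshold c <= tau C.
Proof.
elim: C => [|c' C IH] //= [<-|inC]; rewrite /tau big_cons leq_max ?leqnn //.
by rewrite IH ?orbT.
Qed.

Section Restriction.
Variables (U R : finType) (A : authR U R).

Definition restrict (S : {set U}) : authR U R := [set p in A | p.1 \in S].

Lemma usersOf_restrict S r : usersOf (restrict S) r = usersOf A r :&: S.
Proof. by apply/setP=> u; rewrite !inE. Qed.

Lemma restrict_sub S : restrict S \subset A.
Proof. by apply/subsetP=> p; rewrite inE => /andP[]. Qed.

Lemma card_restrict S : #|restrict S| <= #|S| * #|R|.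
Proof.
rewrite -cardsT -cardsX; apply: subset_leq_card.
by apply/subsetP=> -[u r]; rewrite !inE => /andP[_ ->].
Qed.

Lemma nusers_restrict S : nusers (restrict S) <= #|S|.
Proof.
apply: subset_leq_card; apply/subsetP=> u; rewrite inE => /set0Pn[r].
by rewrite !inE => /andP[_ ->].
Qed.

Definition card_preserving (t : nat) (S : {set U}) :=
  forall r, minn #|usersOf A r| t <= #|usersOf A r :&: S|.

Definition meet_preserving (S : {set U}) :=
  forall r r', usersOf A r :&: usersOf A r' != set0 ->
    usersOf A r :&: usersOf A r' :&: S != set0.

Definition separation_preserving (S : {set U}) :=
  forall r r', usersOf A r != usersOf A r' ->
    usersOf A r :&: S != usersOf A r' :&: S.

Definition adequate (t : nat) (S : {set U}) :=
  [/\ card_preserving t S, meet_preserving S & separation_preserving S].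

Lemma complete_restrict S : complete A -> meet_preserving S -> complete (restrict S).
Proof.
move=> complA meetS r; rewrite usersOf_restrict -[usersOf A r]setIid.
by apply: meetS; rewrite setIid; apply: complA.
Qed.

Lemma wc_restrict_le t S c :
  valid_constr c -> lb_threshold c <= t -> adequate t S ->
  wc c (restrict S) <= wc c A.
Proof.
move=> validc le_t [cardS meetS sepS].
have subS X : X :&: S \subset X by apply: subsetIl.
case: c validc le_t => [r n f|r n f|r r' f|r r' f|r r' l|r r' l] /=;
  rewrite ?/maxdiff !usersOf_restrict.
- move=> [f_mono _] _; apply: f_mono.
  by have := subset_leq_card (subS (usersOf A r)); lia.
- move=> [f_mono f_eq0] le_n; have := cardS r.
  have := subset_leq_card (subS (usersOf A r)).
  case: (leqP n #|usersOf A r :&: S|) => [enough _ _|short le_card le_min].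
    by have /f_eq0 -> : (Posz n - Posz #|usersOf A r :&: S| <= 0)%R by lia.
  by apply: f_mono; lia.
- move=> [f_mono _] _; apply: f_mono; rewrite lez_nat subset_leq_card //.
  exact: setISS.
- move=> [f_mono _] _; apply: f_mono; rewrite lez_nat geq_max !leq_max.
  have diffS X Y : (X :&: S) :\: (Y :&: S) \subset X :\: Y.
    by apply/subsetP=> u; rewrite !inE; case: (u \in S); rewrite ?andbT ?andbF.
  by rewrite !(subset_leq_card (diffS _ _)) orbT.
- by move=> _ _; have /implyP := sepS r r'; case: eqP; case: eqP.
- move=> _ _; rewrite setIACA setIid.
  by have /implyP := meetS r r'; case: eqP; case: eqP.
Qed.

Lemma wC_restrict_le (C : seq (constr R)) S :
  valid_constrs C -> adequate (tau C) S -> wC C (restrict S) <= wC C A.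
Proof.
move=> validC adS; apply: leq_wC => c inC.
by apply: wc_restrict_le adS; [apply: validC | apply: lb_threshold_le_tau].
Qed.

Lemma restrict_adequate (C : seq (constr R)) S :
  complete A -> valid_constrs C -> adequate (tau C) S ->
  [/\ restrict S \subset A, complete (restrict S) & wC C (restrict S) <= wC C A].
Proof.
move=> complA validC adS; have [_ meetS _] := adS.
by split; [apply: restrict_sub | apply: complete_restrict | apply: wC_restrict_le].
Qed.

End Restriction.

Lemma pair_witness_bound k t :
  2 <= k -> 0 < t -> ~~ ((k == 2) && (t == 1)) ->
  k * t + 'C(k, 2) * 2 <= 3 * t * 'C(k, 2).
Proof.
move=> k_ge2 t_gt0 not_2_1.
have binE : k * k.-1 = 2 * 'C(k, 2) by rewrite -mul_bin_diag bin1.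
have [k_gt2|k_le2] := ltnP 2 k.
  have k_le_bin : k <= 'C(k, 2) by nia.
  by nia.
have k2 : k = 2 by lia.
by move: not_2_1; rewrite k2 binn eqxx /=; lia.
Qed.

Section AdequateUsers.
Variables (U R : finType) (A : authR U R) (t : nat).
Hypotheses (complA : complete A) (t_gt0 : 0 < t).

Definition first_users (r : R) : {set U} := [set u in take t (enum (usersOf A r))].

Lemma first_users_sub r : first_users r \subset usersOf A r.
Proof. by apply/subsetP=> u; rewrite inE => /mem_take; rewrite mem_enum. Qed.

Lemma card_first_users r : #|first_users r| = minn t #|usersOf A r|.
Proof.
rewrite cardsE; move/card_uniqP: (take_uniq t (enum_uniq (mem (usersOf A r)))) => ->.
by rewrite size_take_min cardE.
Qed.

Lemma first_users_neq0 r : first_users r != set0.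
Proof. by rewrite -card_gt0 card_first_users leq_min t_gt0 card_gt0 complA. Qed.

Lemma card_bigcup_first_users : #|\bigcup_r first_users r| <= #|R| * t.
Proof.
apply: leq_trans (card_bigcup_le _ _) _; rewrite -sum_nat_const.
by apply: leq_sum => r _; rewrite card_first_users geq_minl.
Qed.

Lemma card_preserving_first_users (S : {set U}) :
  (forall r, first_users r \subset S) -> card_preserving A t S.
Proof.
move=> subS r; rewrite minnC -card_first_users subset_leq_card //.
by rewrite subsetI first_users_sub subS.
Qed.

Definition common_user (X : {set R}) : {set U} :=
  pick_set [pred u | X \subset resOf A u].

Definition separating_user (X : {set R}) : {set U} :=
  pick_set [pred u | ~~ (X \subset resOf A u) && ~~ (X \subset ~: resOf A u)].

Lemma meet_preserving_common_user (S : {set U}) :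
  (forall r, first_users r \subset S) ->
  (forall X, X \in pairs R -> common_user X \subset S) -> meet_preserving A S.
Proof.
move=> subS commonS r r' /set0Pn[u].
have [<-|neq_rr'] := eqVneq r r'.
  move=> _; rewrite setIid; apply/set0Pn.
  have /set0Pn[v v_first] := first_users_neq0 r.
  by exists v; rewrite inE (subsetP (first_users_sub r)) ?(subsetP (subS r)).
rewrite !inE => u_rr'.
have u_common : [set r; r'] \subset resOf A u by rewrite subset_pair !inE.
have [v v_common] := @pick_setP _ [pred w | [set r; r'] \subset resOf A w] u u_common.
rewrite /= subset_pair !inE => v_rr'; apply/set0Pn; exists v.
by rewrite !inE v_rr' (subsetP (commonS _ (pair_in_pairs neq_rr')) v v_common).
Qed.

Lemma separation_preserving_separating_user (S : {set U}) :
  (forall X, X \in pairs R -> separating_user X \subset S) ->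
  separation_preserving A S.
Proof.
move=> sepS r r' neq_users.
have neq_rr' : r != r' by apply: contraNneq neq_users => ->.
have split_pair u : ~~ ([set r; r'] \subset resOf A u) &&
    ~~ ([set r; r'] \subset ~: resOf A u) = ((u \in usersOf A r) != (u \in usersOf A r')).
  by rewrite !subset_pair !inE; case: ((u, r) \in A); case: ((u, r') \in A).
have /existsP[u u_split] : [exists u, (u \in usersOf A r) != (u \in usersOf A r')].
  apply: contraNT neq_users => /existsPn same.
  by apply/eqP/setP => u; apply/eqP; apply: negbNE.
rewrite -split_pair in u_split.
have [v v_sep] := @pick_setP _ [pred w | ~~ ([set r; r'] \subset resOf A w) &&
  ~~ ([set r; r'] \subset ~: resOf A w)] u u_split.
rewrite /= split_pair => v_split.
have vS := subsetP (sepS _ (pair_in_pairs neq_rr')) v v_sep.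
by apply: contra v_split => /eqP/setP/(_ v); rewrite !inE vS !andbT => ->.
Qed.

Lemma adequate_pair_witnesses :
  exists2 S : {set U}, #|S| <= #|R| * t + 'C(#|R|, 2) * 2 & adequate A t S.
Proof.
pose S := \bigcup_r first_users r :|:
  \bigcup_(X in pairs R) (common_user X :|: separating_user X).
have firstS r : first_users r \subset S by rewrite subsetU // (bigcup_sup r).
have pairS X : X \in pairs R -> common_user X :|: separating_user X \subset S.
  by move=> pairX; rewrite subsetU // (bigcup_sup X) ?orbT.
exists S.
  apply: leq_trans (leq_card_setU _ _) _; rewrite leq_add ?card_bigcup_first_users //.
  apply: leq_trans (card_bigcup_le _ _) _.
  rewrite -card_pairs -sum_nat_const leq_sum // => X _.
  by apply: leq_trans (leq_card_setU _ _) (leq_add (card_pick_set _) (card_pick_set _)).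
split.
- exact: card_preserving_first_users.
- by apply: meet_preserving_common_user => // X /pairS; rewrite subUset => /andP[].
- by apply: separation_preserving_separating_user => X /pairS; rewrite subUset => /andP[].
Qed.

Lemma adequate_shared_user u0 :
  t <= 1 -> (forall r, u0 \in usersOf A r) ->
  exists2 S : {set U}, #|S| <= 1 + 'C(#|R|, 2) & adequate A t S.
Proof.
move=> t_le1 u0_all.
pose S := u0 |: \bigcup_(X in pairs R) separating_user X.
have u0S : u0 \in S := setU11 _ _.
exists S.
  apply: leq_trans (leq_card_setU _ _) _; rewrite cards1 leq_add2l.
  apply: leq_trans (card_bigcup_le _ _) _.
  by rewrite -card_pairs -sum1_card leq_sum // => X _; apply: card_pick_set.
split.
- move=> r; apply: leq_trans (geq_minr _ _) _; apply: leq_trans t_le1 _.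
  by rewrite card_gt0; apply/set0Pn; exists u0; rewrite in_setI u0S u0_all.
- by move=> r r' _; apply/set0Pn; exists u0; rewrite !in_setI u0S !u0_all.
- apply: separation_preserving_separating_user => X pairX.
  by rewrite subsetU // (bigcup_sup X) ?orbT.
Qed.

Lemma adequate_disjoint_resources :
  (forall r r', r != r' -> [disjoint usersOf A r & usersOf A r']) ->
  exists2 S : {set U}, #|S| <= #|R| * t & adequate A t S.
Proof.
move=> disj.
pose S := \bigcup_r first_users r.
have first_in r : exists2 u, u \in usersOf A r & u \in S.
  have /set0Pn[u u_first] := first_users_neq0 r.
  by exists u; [apply: (subsetP (first_users_sub r)) | apply: (subsetP (bigcup_sup r _))].
exists S; first exact: card_bigcup_first_users.
split.
- by apply: card_preserving_first_users => r; apply: bigcup_sup.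
- move=> r r'; have [<-|neq_rr'] := eqVneq r r'; last by rewrite setI_eq0 disj.
  have [u ur uS] := first_in r.
  by rewrite setIid => _; apply/set0Pn; exists u; rewrite inE ur uS.
- move=> r r' neq_users; have neq_rr' : r != r' by apply: contraNneq neq_users => ->.
  have [u ur uS] := first_in r.
  apply: contraTneq (ur) => /setP/(_ u); rewrite !in_setI uS !andbT => ->.
  by rewrite (disjointFr (disj _ _ neq_rr') ur).
Qed.

Lemma adequate_two_resources :
  #|R| = 2 -> t = 1 -> exists2 S : {set U}, #|S| <= 2 & adequate A t S.
Proof.
move=> cardR t1.
case: (boolP [exists u, [forall r, u \in usersOf A r]]) =>
    [/existsP[u0 /forallP u0_all]|/existsPn no_shared].
  have [S cardS adS] := adequate_shared_user (eq_leq t1) u0_all.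
  by exists S => //; apply: leq_trans cardS _; rewrite cardR.
have [|S cardS adS] := adequate_disjoint_resources.
  move=> r r' neq_rr'; rewrite -setI_eq0; apply/eqP/setP => u; rewrite !inE.
  apply/negP => /andP[ur ur']; have /forallPn[r0] := no_shared u; apply/negP/negPn.
  have := in_setT r0; rewrite -(pair_setT cardR neq_rr') in_set2.
  by case/orP => /eqP->; rewrite inE.
by exists S => //; apply: leq_trans cardS _; rewrite cardR t1.
Qed.

Lemma exists_small_adequate :
  2 <= #|R| -> exists2 S : {set U}, #|S| <= 3 * t * 'C(#|R|, 2) & adequate A t S.
Proof.
move=> R_ge2.
case: (boolP ((#|R| == 2) && (t == 1))) => [/andP[/eqP cardR /eqP t1]|generic].
  have [S cardS adS] := adequate_two_resources cardR t1.
  by exists S => //; apply: leq_trans cardS _; rewrite cardR t1.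
have [S cardS adS] := adequate_pair_witnesses.
by exists S => //; apply: leq_trans cardS (pair_witness_bound R_ge2 t_gt0 generic).
Qed.

End AdequateUsers.

Theorem lemma4p6 (U R : finType) (C : seq (constr R))
    (omega : U -> {set R} -> nat) :
  monotone_omega omega ->
  valid_constrs C ->
  2 <= #|R| -> 1 <= tau C ->
  wbounded U C (3 * tau C * #|R| * 'C(#|R|, 2)) /\
  (forall A : authR U R, complete A ->
     exists Astar : authR U R,
       [/\ Astar \subset A, complete Astar,
           nusers Astar <= 3 * tau C * 'C(#|R|, 2) &
           wC C Astar <= wC C A]).
Proof.
(* [omega] does not enter the weight [wC]. *)
move=> _ validC R_ge2 tau_gt0.
have small (A : authR U R) : complete A ->
  exists2 S : {set U}, #|S| <= 3 * tau C * 'C(#|R|, 2) &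
    [/\ restrict A S \subset A, complete (restrict A S) & wC C (restrict A S) <= wC C A].
  move=> complA; have [S cardS adS] := exists_small_adequate complA tau_gt0 R_ge2.
  by exists S => //; apply: restrict_adequate.
split=> [A /small[S cardS [subA complS wCS]] lt_A | A /small[S cardS [subA complS wCS]]];
  exists (restrict A S); split => //.
- apply: leq_ltn_trans (card_restrict A S) (leq_ltn_trans _ lt_A).
  by rewrite mulnAC leq_mul2r cardS orbT.
- exact: leq_trans (nusers_restrict A S) cardS.
Qed.
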